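(* Let $0 \le r \le n/2$ be an integer and let $A$ be the adjacency matrix of the subgraph of the Hamming cube $\{0,1\}^n$ induced by the Hamming ball $B(n,r) = \{x : |x| \le r\}$. Then the maximal eigenvalue of $A$ is $\lambda = n - 2x$, where $x$ is the smallest root of the Krawtchouk polynomial $K^{(n)}_{r+1}$. Its multiplicity is $1$, and the corresponding eigenfunction is a positive spherical function on $B(n,r)$ (i.e. its value at a point $y$ depends only on $|y|$).
   Context: The Hamming cube $\{0,1\}^n$ is the graph where two vectors are adjacent iff they differ in exactly one coordinate; $|x|$ is the number of nonzero coordinates of $x$. The Krawtchouk polynomial is $K^{(n)}_k(x)=\sum_{\ell=0}^k(-1)^\ell\binom{x}{\ell}\binom{n-x}{k-\ell}$; its roots are real, distinct and lie in $(0,n)$. *)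

From mathcomp Require Import all_boot all_order all_algebra.
Set Implicit Arguments. Unset Strict Implicit. Unset Printing Implicit Defensive.
Import Order.TTheory GRing.Theory Num.Theory.
Local Open Scope ring_scope.

Definition cube (n : nat) := {ffun 'I_n -> bool}.

Definition hweight (n : nat) (x : cube n) : nat := #|[pred i | x i]|.

Definition hadj (n : nat) (x y : cube n) : bool := #|[pred i | x i != y i]| == 1%N.

Definition hball (n r : nat) : {set cube n} := [set x | (hweight x <= r)%N].

Definition ball_adj (R : nzRingType) (n r : nat) : 'M[R]_#|hball n r| :=
  \matrix_(i, j) (hadj (enum_val i) (enum_val j))%:R.

Definition gbinom (R : fieldType) (x : R) (l : nat) : R :=
  (\prod_(m < l) (x - m%:R)) / (l`!)%:R.

Definition krawtchouk (R : fieldType) (n k : nat) (x : R) : R :=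
  \sum_(l < k.+1) (-1) ^+ l * gbinom x l * gbinom (n%:R - x) (k - l).

(* For v(y) = f(|y|) the equation v A = lam v on the ball
   reads k f(k-1) + (n-k) f(k+1) = lam f(k) for k <= r, with f(r+1) = 0 standing for the missing
   neighbours of weight r+1.  By the three-term recurrence of the Krawtchouk polynomials,
   f(k) = K_k(x) / binom(n,k) solves it with lam = n - 2x as soon as K_(r+1)(x) = 0, and when x
   is the smallest root of K_(r+1) the values K_0(x), ..., K_r(x) are all positive.  A positive
   eigenvector of a nonnegative symmetric matrix with connected graph has the largest eigenvalue
   and spans its eigenspace; by symmetry that eigenvalue is moreover a simple root of the
   characteristic polynomial. *)

From mathcomp Require Import all_boot all_order all_algebra.
From mathcomp Require Import polyrcf mxred.
From mathcomp Require Import zify ring lra.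
Set Implicit Arguments. Unset Strict Implicit. Unset Printing Implicit Defensive.
Import Order.TTheory GRing.Theory Num.Theory.
Local Open Scope ring_scope.

(* K_k(y) is the convolution of (-1)^l binom(y,l) and binom(n-y,m), two sequences satisfying
   first-order recurrences. *)
Definition convolution (R : nzSemiRingType) (f g : nat -> R) k :=
  \sum_(l < k.+1) f l * g (k - l)%N.

Section ConvolutionRecurrence.
Variables (R : comNzRingType) (alpha beta : nat -> R) (a b : R).
Hypothesis alphaS : forall l, l.+1%:R * alpha l.+1 = (l%:R - a) * alpha l.
Hypothesis betaS : forall m, m.+1%:R * beta m.+1 = (b - m%:R) * beta m.

Local Notation c := (convolution alpha beta).
Local Notation c_left := (convolution (fun l => l%:R * alpha l) beta).
Local Notation c_right := (convolution alpha (fun m => m%:R * beta m)).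

Lemma convolution_split k : k%:R * c k = c_left k + c_right k.
Proof.
rewrite mulr_sumr -big_split /=; apply: eq_bigr => l _.
have l_le_k : (l <= k)%N by rewrite -ltnS.
by rewrite -{1}(subnKC l_le_k) natrD; ring.
Qed.

Lemma convolution_leftS k : c_left k.+1 = - a * c k + c_left k.
Proof.
rewrite /convolution big_ord_recl mul0r mul0r add0r mulr_sumr -big_split /=.
apply: eq_bigr => l _; rewrite /bump /= add1n subSS (alphaS l); ring.
Qed.

Lemma convolution_rightS k : c_right k.+1 = b * c k - c_right k.
Proof.
rewrite /convolution big_ord_recr /= subnn mul0r mulr0 addr0 mulr_sumr.
rewrite -sumrN -big_split /=; apply: eq_bigr => l _.
have l_le_k : (l <= k)%N by rewrite -ltnS.
by rewrite subSn // betaS; ring.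
Qed.

Lemma convolution_recurrence k :
  k.+2%:R * c k.+2 = (b - a) * c k.+1 + (k%:R - a - b) * c k.
Proof.
rewrite convolution_split convolution_leftS convolution_rightS.
rewrite convolution_leftS convolution_rightS.
have -> : (k%:R - a - b) * c k = k%:R * c k - a * c k - b * c k by ring.
by rewrite convolution_split; ring.
Qed.

End ConvolutionRecurrence.

Section Krawtchouk.
Variable R : numFieldType.
Implicit Types (x y : R) (n k l : nat).

Lemma gbinom0 x : gbinom x 0 = 1.
Proof. by rewrite /gbinom big_ord0 fact0 divr1. Qed.

Lemma gbinom1 x : gbinom x 1 = x.
Proof. by rewrite /gbinom big_ord1 divr1 subr0. Qed.

Lemma gbinomS x l : l.+1%:R * gbinom x l.+1 = (x - l%:R) * gbinom x l.
Proof.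
rewrite /gbinom big_ord_recr /= factS natrM.
have fact_neq0 : l`!%:R != 0 :> R by rewrite pnatr_eq0 -lt0n fact_gt0.
by field; rewrite fact_neq0 nat1r pnatr_eq0.
Qed.

Lemma krawtchouk_convolution n k y :
  krawtchouk n k y =
  convolution (fun l => (-1) ^+ l * gbinom y l) (gbinom (n%:R - y)) k.
Proof. by []. Qed.

Lemma krawtchouk0 n y : krawtchouk n 0 y = 1.
Proof. by rewrite /krawtchouk big_ord1 /= !gbinom0 expr0 !mulr1. Qed.

Lemma krawtchouk1 n y : krawtchouk n 1 y = n%:R - 2 * y.
Proof.
by rewrite /krawtchouk big_ord_recr big_ord1 /= !gbinom0 !gbinom1; ring.
Qed.

Lemma krawtchoukSS n k y :
  k.+2%:R * krawtchouk n k.+2 y =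
  (n%:R - 2 * y) * krawtchouk n k.+1 y - (n%:R - k%:R) * krawtchouk n k y.
Proof.
rewrite !krawtchouk_convolution (convolution_recurrence (a := y) (b := n%:R - y)).
- by ring.
- by move=> l; rewrite exprS mulrCA gbinomS; ring.
- by move=> m; rewrite gbinomS.
Qed.
End Krawtchouk.

Section KrawtchoukNegative.
Variable R : realFieldType.
Implicit Types (x y : R) (n k l : nat).

Lemma gbinom_gt0 x l : (forall m, (m < l)%N -> m%:R < x) -> 0 < gbinom x l.
Proof.
move=> x_gt; apply: divr_gt0; last by rewrite ltr0n fact_gt0.
by apply: prodr_gt0 => m _; rewrite subr_gt0 x_gt.
Qed.

Lemma signed_gbinom_gt0 y l : y < 0 -> 0 < (-1) ^+ l * gbinom y l.
Proof.
move=> y_lt0; rewrite /gbinom mulrA -[in (-1) ^+ l](card_ord l) -prodrN.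
apply: divr_gt0; last by rewrite ltr0n fact_gt0.
apply: prodr_gt0 => m _; rewrite opprB subr_gt0.
exact: lt_le_trans y_lt0 (ler0n _ _).
Qed.

Lemma krawtchouk_gt0 n k y : y < 0 -> (k <= n.+1)%N -> 0 < krawtchouk n k y.
Proof.
move=> y_lt0 k_le.
have term_gt0 (l : 'I_k.+1) : 0 < (-1) ^+ l * gbinom y l * gbinom (n%:R - y) (k - l).
  apply: mulr_gt0; first exact: signed_gbinom_gt0.
  apply: gbinom_gt0 => m m_lt.
  have m_le_n : m%:R <= n%:R :> R by rewrite ler_nat; lia.
  lra.
rewrite /krawtchouk (bigD1 ord0) //=; apply: ltr_wpDr; last exact: (term_gt0 ord0).
by apply: sumr_ge0 => l _; apply/ltW/term_gt0.
Qed.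
End KrawtchoukNegative.

Definition normalized_krawtchouk (R : fieldType) n k (y : R) :=
  krawtchouk n k y / 'C(n, k)%:R.

Section NormalizedKrawtchouk.
Variable R : numFieldType.
Implicit Types (y : R) (n k : nat).

Lemma binomial_ratioS n k : (k < n)%N ->
  k.+1%:R / 'C(n, k)%:R = (n - k)%:R / 'C(n, k.+1)%:R :> R.
Proof.
move=> k_lt_n; apply/eqP.
by rewrite eqr_div ?pnatr_eq0 -?lt0n ?bin_gt0 ?(ltnW k_lt_n) // -!natrM mul_bin_left.
Qed.

Local Notation f n k y := (normalized_krawtchouk n k y).

Lemma normalized_krawtchouk_recurrence n k y : (k < n)%N ->
  k%:R * f n k.-1 y + (n - k)%:R * f n k.+1 y = (n%:R - 2 * y) * f n k y.
Proof.
rewrite /normalized_krawtchouk; case: k => [|k] k_lt_n /=.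
  rewrite mul0r add0r subn0 bin0 bin1 krawtchouk0 krawtchouk1 divr1 mulr1.
  by rewrite mulrCA divff ?mulr1 // pnatr_eq0 -lt0n.
transitivity (krawtchouk n k y * (k.+1%:R / 'C(n, k)%:R) +
              krawtchouk n k.+2 y * ((n - k.+1)%N%:R / 'C(n, k.+2)%:R)).
  by ring.
rewrite (binomial_ratioS (ltnW k_lt_n)) -(binomial_ratioS k_lt_n).
transitivity (((n%:R - k%:R) * krawtchouk n k y + k.+2%:R * krawtchouk n k.+2 y)
              / 'C(n, k.+1)%:R).
  by rewrite natrB ?(ltnW (ltnW k_lt_n)) //; ring.
by rewrite krawtchoukSS; ring.
Qed.

(* For k = n this is the three-term recurrence at a root of K_(n+1). *)
Lemma normalized_krawtchouk_root_recurrence n r k y :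
  (r <= n)%N -> krawtchouk n r.+1 y = 0 -> (k <= r)%N ->
  k%:R * f n k.-1 y + (n - k)%:R * f n k.+1 y = (n%:R - 2 * y) * f n k y.
Proof.
move=> r_le_n Ky k_le_r; have [k_lt_n|n_le_k] := ltnP k n.
  exact: normalized_krawtchouk_recurrence.
have [-> r_eq_n] : k = n /\ r = n by lia.
rewrite subnn mul0r addr0 {}r_eq_n in Ky *; rewrite /normalized_krawtchouk.
case: n Ky {r_le_n k_le_r n_le_k} => [|m] Ky; first by rewrite -krawtchouk1 Ky !mul0r.
rewrite /= binSn binn divr1 mulrCA divff ?mulr1 ?pnatr_eq0 //.
have one : m.+1%:R - m%:R = 1 :> R by rewrite -natr1 addrAC subrr add0r.
have := krawtchoukSS m.+1 m y; rewrite Ky mulr0 one mul1r.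
by move/esym/eqP; rewrite subr_eq0 => /eqP.
Qed.
End NormalizedKrawtchouk.

Lemma poly_first_root (R : rcfType) (p : {poly R}) a z :
  p != 0 -> a < z -> root p z ->
  exists h, [/\ a < h <= z, root p h & forall y, a < y < h -> ~~ root p y].
Proof.
move=> p_neq0 a_lt_z pz.
have z_in : z \in `]a, z + 1[ by rewrite in_itv /= a_lt_z ltrDl ltr01.
have := root_in_roots p_neq0 z_in pz.
case E: (roots p a (z + 1)) => [//|h s] _.
move/eqP: E; rewrite roots_cons => /and5P[_ h_in /eqP no_root_before ph _].
have noroot y : a < y < h -> ~~ root p y.
  by move=> y_in; apply: (roots_nil p_neq0 no_root_before); rewrite in_itv.
exists h; split => //; rewrite (itvP h_in) /= leNgt; apply/negP => z_lt_h.
by move: pz; apply/negP/noroot; rewrite a_lt_z.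
Qed.

(* At the first point h > a where some p_j vanishes, all p_j are nonnegative by the IVT, and
   the least index k with p_k(h) = 0 must be m, as otherwise p_(k+1)(h) < 0. *)
Section FirstRootPositivity.
Variables (R : rcfType) (p : nat -> {poly R}) (m : nat) (a x : R).
Hypothesis p0_noroot : forall z, ~~ root (p 0) z.
Hypothesis p_gt0_at_a : forall j, (j <= m)%N -> 0 < (p j).[a].
Hypothesis p_sign_alternation : forall k z, (k.+2 <= m)%N ->
  root (p k.+1) z -> 0 < (p k).[z] -> (p k.+2).[z] < 0.
Hypothesis a_lt_x : a < x.
Hypothesis pm_x : root (p m) x.
Hypothesis pm_noroot_before_x : forall y, a < y < x -> ~~ root (p m) y.

Lemma gt0_before_first_root j : (j < m)%N -> 0 < (p j).[x].
Proof.
pose q := \prod_(i < m.+1) p i.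
have root_q z : root q z = [exists i : 'I_m.+1, root (p i) z].
  rewrite /root horner_prod.
  by apply/prodf_eq0/existsP => -[i] => [_|] pi; exists i.
have q_neq0 : q != 0.
  apply/negP => /eqP q0; have : root q a by rewrite q0 root0.
  by rewrite root_q => /existsP[i]; rewrite /root gt_eqF // p_gt0_at_a // -ltnS.
have qx : root q x by rewrite root_q; apply/existsP; exists ord_max.
have [h [/andP[a_lt_h h_le_x] qh q_noroot]] := poly_first_root q_neq0 a_lt_x qx.
have p_ge0_at_h i : (i <= m)%N -> 0 <= (p i).[h].
  move=> i_le_m; rewrite leNgt; apply/negP => pih_lt0.
  have sign_change : (p i).[a] * (p i).[h] < 0 by rewrite pmulr_rlt0 // p_gt0_at_a.
  have [z z_in pz] := poly_ivtoo (ltW a_lt_h) sign_change.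
  move: z_in; rewrite in_itv /= => /andP[a_lt_z z_lt_h].
  have /negP : ~~ root q z by rewrite q_noroot // a_lt_z.
  apply.
  by rewrite root_q; apply/existsP; exists (Ordinal (i_le_m : (i < m.+1)%N)).
have some_root : exists k, (k <= m)%N && root (p k) h.
  by move: qh; rewrite root_q => /existsP[i pi]; exists i; rewrite pi -ltnS ltn_ord.
case: (ex_minnP some_root) => k /andP[k_le_m pk_h] k_min.
have p_gt0_at_h i' : (i' < k)%N -> 0 < (p i').[h].
  move=> i'_lt_k; rewrite lt_def p_ge0_at_h ?(leq_trans (ltnW i'_lt_k)) // andbT.
  apply/negP => pi'.
  have := k_min i' (introT andP (conj (leq_trans (ltnW i'_lt_k) k_le_m) pi')).
  by rewrite leqNgt i'_lt_k.
have k_eq_m : k = m.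
  case: k k_le_m pk_h k_min p_gt0_at_h => [|k] k_le_m pk_h _ p_gt0_at_h.
    by rewrite (negPf (p0_noroot h)) in pk_h.
  apply/eqP; rewrite eqn_leq k_le_m leqNgt; apply/negP => k_lt_m.
  have := p_sign_alternation k_lt_m pk_h (p_gt0_at_h k (ltnSn k)).
  by rewrite ltNge p_ge0_at_h.
have h_eq_x : h = x.
  apply/eqP; rewrite eq_le h_le_x leNgt; apply/negP => h_lt_x.
  have /negP : ~~ root (p m) h by rewrite pm_noroot_before_x // a_lt_h.
  by rewrite -k_eq_m.
by rewrite -h_eq_x => j_lt_m; apply: p_gt0_at_h; rewrite k_eq_m.
Qed.

End FirstRootPositivity.

Definition gbinom_poly (R : fieldType) (p : {poly R}) l : {poly R} :=
  \prod_(m < l) (p - m%:R%:P) * (l`!%:R^-1)%:P.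

Definition krawtchouk_poly (R : fieldType) n k : {poly R} :=
  \sum_(l < k.+1)
    ((-1) ^+ l)%:P * gbinom_poly 'X l * gbinom_poly (n%:R%:P - 'X) (k - l)%N.
Arguments krawtchouk_poly {R} n k.

Lemma horner_gbinom_poly (R : fieldType) (p : {poly R}) l x :
  (gbinom_poly p l).[x] = gbinom p.[x] l.
Proof.
rewrite /gbinom_poly /gbinom hornerM hornerC horner_prod.
by congr (_ * _); apply: eq_bigr => m _; rewrite hornerD hornerN hornerC.
Qed.

Lemma horner_krawtchouk_poly (R : fieldType) n k (x : R) :
  (krawtchouk_poly n k).[x] = krawtchouk n k x.
Proof.
rewrite /krawtchouk_poly horner_sum; apply: eq_bigr => l _.
by rewrite 2!hornerM hornerC !horner_gbinom_poly !hornerE.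
Qed.

Lemma krawtchouk_gt0_before_first_root (R : rcfType) n r (x : R) :
  (r <= n)%N -> krawtchouk n r.+1 x = 0 ->
  (forall y, krawtchouk n r.+1 y = 0 -> x <= y) ->
  forall j, (j <= r)%N -> 0 < krawtchouk n j x.
Proof.
move=> r_le_n Kx x_min j j_le_r.
have x_gt : -1 < x.
  rewrite ltNge; apply/negP => x_le.
  have := @krawtchouk_gt0 R n r.+1 x (le_lt_trans x_le (ltrN10 R)) r_le_n.
  by rewrite Kx ltxx.
rewrite -horner_krawtchouk_poly.
apply: (@gt0_before_first_root R (krawtchouk_poly n) r.+1 (-1)) => //.
- by move=> z; rewrite /root horner_krawtchouk_poly krawtchouk0 oner_eq0.
- move=> i i_le; rewrite horner_krawtchouk_poly krawtchouk_gt0 ?ltrN10 //.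
  lia.
- move=> k z k_lt /eqP; rewrite !horner_krawtchouk_poly => Kz Kk_gt0.
  have n_gt_k : 0 < n%:R - k%:R :> R by rewrite subr_gt0 ltr_nat; lia.
  rewrite -(pmulr_rlt0 _ (ltr0Sn R k.+1)) krawtchoukSS Kz mulr0 sub0r oppr_lt0.
  exact: mulr_gt0.
- by rewrite /root horner_krawtchouk_poly Kx.
- move=> y /andP[_ y_lt_x]; apply/negP; rewrite /root horner_krawtchouk_poly => /eqP Ky.
  by have := x_min y Ky; rewrite leNgt y_lt_x.
Qed.

Lemma char_poly_similar (F : fieldType) n (A D P : 'M[F]_n) :
  P \in unitmx -> P *m A = D *m P -> char_poly A = char_poly D.
Proof.
move=> P_unit PA.
pose P' := map_mx (@polyC F) P.
have : char_poly_mx D *m P' = P' *m char_poly_mx A.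
  by rewrite /char_poly_mx mulmxBl mulmxBr -scalar_mxC -!map_mxM PA.
have detP_neq0 : (\det P)%:P != 0 by rewrite polyC_eq0 -unitfE -unitmxE.
move/(congr1 determinant); rewrite !det_mulmx det_map_mx [RHS]mulrC.
by move/(mulIf detP_neq0).
Qed.

Lemma sum_delta (R : pzSemiRingType) m (a : 'I_m) (f : 'I_m -> R) :
  \sum_i (i == a)%:R * f i = f a.
Proof.
by rewrite (bigD1 a) //= eqxx mul1r big1 ?addr0 // => i /negPf ->; rewrite mul0r.
Qed.

(* When [v 0 i0 != 0], the rows form a basis of the orthogonal complement of [v]. *)
Definition ortho_complement (F : fieldType) k (v : 'rV[F]_k.+1) (i0 : 'I_k.+1) :
    'M[F]_(k, k.+1) :=
  \matrix_(j, i) (v 0 i0 * (i == lift i0 j)%:R - v 0 (lift i0 j) * (i == i0)%:R).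

(* In the basis (v, W) the matrix A is block diagonal with blocks lam and B, and lam is not an
   eigenvalue of B. *)
Section SimpleEigenvalue.
Variables (F : fieldType) (k : nat) (A : 'M[F]_k.+1) (lam : F) (v : 'rV[F]_k.+1).
Variable i0 : 'I_k.+1.
Hypothesis A_sym : A^T = A.
Hypothesis vA : v *m A = lam *: v.
Hypothesis vvT_neq0 : (v *m v^T) 0 0 != 0.
Hypothesis v_i0_neq0 : v 0 i0 != 0.
Hypothesis eigen_span : forall u, u *m A = lam *: u -> exists c, u = c *: v.

Local Notation W := (ortho_complement v i0).

Lemma ortho_complement_orth : W *m v^T = 0.
Proof.
apply/matrixP => j z; rewrite !mxE.
under eq_bigr => i _ do rewrite !mxE mulrBl -!mulrA.
by rewrite sumrB -!mulr_sumr !sum_delta (ord1 z) mulrC subrr.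
Qed.

Lemma ortho_complement_free : row_free W.
Proof.
rewrite -kermx_eq0; apply/rowV0P => w /sub_kermxP wW; apply/rowP => j.
have /rowP/(_ (lift i0 j)) := wW; rewrite !mxE.
under eq_bigr => j' _ do rewrite !mxE (inj_eq (@lift_inj _ i0)) lift_eqF mulr0 subr0 eq_sym.
rewrite (eq_bigr (fun j' => (j' == j)%:R * (w 0 j' * v 0 i0))) => [|j' _]; last by ring.
by rewrite sum_delta => /eqP; rewrite mulf_eq0 (negPf v_i0_neq0) orbF => /eqP.
Qed.

Lemma kermx_sub_ortho_complement : (kermx v^T <= W)%MS.
Proof.
have v_neq0 : v != 0 by apply: contraNneq vvT_neq0 => ->; rewrite mul0mx mxE.
have W_sub : (W <= kermx v^T)%MS by apply/sub_kermxP; exact: ortho_complement_orth.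
have [_] := mxrank_leqif_sup W_sub; rewrite mxrank_ker mxrank_tr rank_rV v_neq0.
by rewrite (eqnP ortho_complement_free) subn1 eqxx.
Qed.

Lemma ortho_complement_stable : (W *m A <= W)%MS.
Proof.
apply: submx_trans kermx_sub_ortho_complement; apply/sub_kermxP.
have AvT : A *m v^T = lam *: v^T by rewrite -{1}A_sym -trmx_mul vA linearZ.
by rewrite -mulmxA AvT -scalemxAr ortho_complement_orth scaler0.
Qed.

Lemma ortho_complement_eigen_free u c : u *m W = c *: v -> u = 0.
Proof.
move=> uW; have : u *m W *m v^T = 0 by rewrite -mulmxA ortho_complement_orth mulmx0.
rewrite uW -scalemxAl => /rowP/(_ 0); rewrite [LHS]mxE [RHS]mxE => /eqP.
rewrite mulf_eq0 (negPf vvT_neq0) orbF => /eqP c0.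
by apply/eqP; rewrite -(mulmx_free_eq0 _ ortho_complement_free) uW c0 scale0r.
Qed.

Let B := conjmx W A.

Lemma ortho_complement_conj : W *m A = B *m W.
Proof. by rewrite /B /conjmx mulmxKpV // ortho_complement_stable. Qed.

Lemma conj_char_poly_noroot : ~~ root (char_poly B) lam.
Proof.
rewrite -eigenvalue_root_char; apply/negP => /eigenvalueP[w wB w_neq0].
have : (w *m W) *m A = lam *: (w *m W).
  by rewrite -mulmxA ortho_complement_conj mulmxA wB scalemxAl.
by move/eigen_span => [c /ortho_complement_eigen_free w0]; rewrite w0 eqxx in w_neq0.
Qed.

Let P : 'M[F]_(1 + k) := col_mx v W.

Lemma ortho_basis_unit : P \in unitmx.
Proof.
rewrite -row_free_unit -kermx_eq0; apply/rowV0P => w /sub_kermxP.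
rewrite -(hsubmxK w) mul_row_col => wP.
have : (lsubmx w *m v + rsubmx w *m W) *m v^T = 0 by rewrite wP mul0mx.
rewrite mulmxDl -!mulmxA ortho_complement_orth mulmx0 addr0.
rewrite [v *m _]mx11_scalar mul_mx_scalar => /eqP.
rewrite scaler_eq0 (negPf vvT_neq0) => /eqP w1_eq0.
rewrite w1_eq0 mul0mx add0r in wP.
by rewrite w1_eq0 (@ortho_complement_eigen_free (rsubmx w) 0) ?row_mx0 // wP scale0r.
Qed.

Lemma mup_char_poly_eq1_pivot : mup lam (char_poly A) = 1%N.
Proof.
have PA : P *m A = block_mx (lam%:M : 'M_1) 0 0 B *m P.
  rewrite mul_col_mx mul_block_col !mul0mx addr0 add0r mul_scalar_mx.
  by rewrite vA ortho_complement_conj.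
rewrite (char_poly_similar ortho_basis_unit PA) /char_poly char_block_diag_mx det_ublock.
rewrite det_mx11 /char_poly_mx !mxE eqxx !mulr1n -/(char_poly B) mupM.
- by rewrite (mupNroot conj_char_poly_noroot) addn0 -['X - _]expr1 mup_XsubCX eqxx.
- by rewrite polyXsubC_eq0.
- by rewrite monic_neq0 // char_poly_monic.
Qed.

End SimpleEigenvalue.

Lemma mup_char_poly_eq1 (F : fieldType) N (A : 'M[F]_N) lam (v : 'rV[F]_N) :
  A^T = A -> v *m A = lam *: v -> (v *m v^T) 0 0 != 0 ->
  (forall u, u *m A = lam *: u -> exists c, u = c *: v) ->
  mup lam (char_poly A) = 1%N.
Proof.
case: N A v => [|k] A v A_sym vA vvT_neq0 eigen_span.
  by move: vvT_neq0; rewrite mxE big_ord0 eqxx.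
have [i0 v_i0_neq0] : exists i0, v 0 i0 != 0.
  apply/existsP; apply: contraR vvT_neq0 => /existsPn v0.
  by rewrite mxE big1 // => i _; rewrite (eqP (negPn (v0 i))) mul0r.
exact: mup_char_poly_eq1_pivot v_i0_neq0 eigen_span.
Qed.

Lemma eigenspace_rank_eq1 (F : fieldType) N (A : 'M[F]_N) lam (v : 'rV_N) :
  v != 0 -> v *m A = lam *: v ->
  (forall u, u *m A = lam *: u -> exists c, u = c *: v) ->
  \rank (eigenspace A lam) = 1%N.
Proof.
move=> v_neq0 vA eigen_span.
have v_sub : (v <= eigenspace A lam)%MS by apply/eigenspaceP.
have sub_v : (eigenspace A lam <= v)%MS.
  apply/row_subP => i; have /eigenspaceP/eigen_span[c ->] := row_sub i (eigenspace A lam).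
  by apply/sub_rVP; exists c.
have /eqmx_rank <- : (v == eigenspace A lam)%MS by apply/andP.
by rewrite rank_rV v_neq0.
Qed.

Section PositiveEigenvector.
Variables (R : realFieldType) (N : nat) (A : 'M[R]_N) (lam : R) (v : 'rV[R]_N).
Hypothesis A_ge0 : forall i j, 0 <= A i j.
Hypothesis vA : v *m A = lam *: v.
Hypothesis v_gt0 : forall i, 0 < v 0 i.

(* With t = min u_i / v_i, u - t v is a nonnegative eigenvector with a zero entry; its zero set is
   closed under the edges of A, hence everything. *)
Lemma pos_eigenvector_unique :
  (forall i j, connect (fun i j => A i j != 0) i j) ->
  forall u, u *m A = lam *: u -> exists c, u = c *: v.
Proof.
move=> A_connected u uA.
have [i0 _ | N_empty] := pickP (@predT 'I_N); last first.
  by exists 0; apply/rowP => j; have := N_empty j.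
pose im := [arg min_(i < i0) (u 0 i / v 0 i)]%O.
pose t := u 0 im / v 0 im.
exists t; pose w := u - t *: v.
have wA : w *m A = lam *: w by rewrite mulmxBl -scalemxAl uA vA scalerBr !scalerA mulrC.
have w_ge0 j : 0 <= w 0 j.
  rewrite !mxE subr_ge0 -ler_pdivlMr // /t.
  by rewrite /im; case: arg_minP => // i _; apply.
have w_zero j : w 0 j = 0 -> forall i, A i j != 0 -> w 0 i = 0.
  move=> wj0 i Aij; have /rowP/(_ j) := wA; rewrite mxE [RHS]mxE wj0 mulr0 => sum0.
  have terms_ge0 k : true -> 0 <= w 0 k * A k j by move=> _; apply: mulr_ge0.
  have /eqP := psumr_eq0P terms_ge0 sum0 (i := i) isT.
  by rewrite mulf_eq0 (negPf Aij) orbF => /eqP.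
have w_min0 : w 0 im = 0.
  by rewrite !mxE /t mulrAC -mulrA divff ?mulr1 ?subrr // gt_eqF.
suff w_eq0 j : w 0 j = 0.
  by apply/rowP => j; apply/eqP; rewrite -subr_eq0; have := w_eq0 j; rewrite !mxE => ->.
have /connectP[p p_path p_last] := A_connected j im.
elim: p j p_path p_last => [|k p IHp] j /=; first by move=> _ <-; rewrite w_min0.
by move=> /andP[Ajk p_path] p_last; rewrite (w_zero k) ?(IHp k p_path p_last).
Qed.

(* Pair the componentwise inequality mu |u| <= |u| A with the right eigenvector v^T. *)
Lemma eigenvalue_le_pos_eigenvalue : A^T = A ->
  forall mu, eigenvalue A mu -> mu <= lam.
Proof.
move=> A_sym mu /eigenvalueP[u uA u_neq0].
pose a := \row_j `|u 0 j|.
have AvT : A *m v^T = lam *: v^T by rewrite -{1}A_sym -trmx_mul vA linearZ.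
have mu_a_le j : mu * a 0 j <= (a *m A) 0 j.
  have /rowP/(_ j) := uA; rewrite !mxE => uAj.
  apply: le_trans (ler_norm _) _; rewrite normrM normr_id -normrM -uAj.
  apply: le_trans (ler_norm_sum _ _ _) _; apply: ler_sum => i _.
  by rewrite normrM (ger0_norm (A_ge0 i j)) mxE.
have av_gt0 : 0 < (a *m v^T) 0 0.
  have [j uj_neq0] : exists j, u 0 j != 0.
    apply/existsP; apply: contraR u_neq0 => /existsPn u0; apply/eqP/rowP => j.
    by rewrite mxE; apply/eqP/negPn/u0.
  rewrite mxE (bigD1 j) //= ltr_wpDr //.
    by apply: sumr_ge0 => i _; rewrite !mxE mulr_ge0 ?normr_ge0 ?ltW.
  by rewrite !mxE mulr_gt0 ?normr_gt0.
rewrite -(ler_pM2r av_gt0); apply: le_trans (_ : (a *m A *m v^T) 0 0 <= _).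
  rewrite mxE mulr_sumr [X in _ <= X]mxE; apply: ler_sum => j _.
  by rewrite mulrA ler_wpM2r // mxE ltW.
by rewrite -mulmxA AvT -scalemxAr mxE.
Qed.

Hypothesis N_gt0 : (0 < N)%N.

Let v_neq0 : v != 0.
Proof. by apply: contraTneq (v_gt0 (Ordinal N_gt0)) => ->; rewrite mxE ltxx. Qed.

Lemma pos_eigenvalue : eigenvalue A lam.
Proof. by apply/eigenvalueP; exists v. Qed.

Lemma pos_eigenspace_rank :
  (forall i j, connect (fun i j => A i j != 0) i j) ->
  \rank (eigenspace A lam) = 1%N.
Proof.
by move=> A_connected; apply: eigenspace_rank_eq1 vA _ => //; apply: pos_eigenvector_unique.
Qed.

Lemma pos_eigenvalue_mup : A^T = A ->
  (forall i j, connect (fun i j => A i j != 0) i j) ->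
  mup lam (char_poly A) = 1%N.
Proof.
move=> A_sym A_connected; apply: mup_char_poly_eq1 A_sym vA _ _.
  rewrite mxE gt_eqF // (bigD1 (Ordinal N_gt0)) //= ltr_wpDr ?mxE ?mulr_gt0 //.
  by apply: sumr_ge0 => i _; rewrite mxE mulr_ge0 ?ltW.
exact: pos_eigenvector_unique.
Qed.

End PositiveEigenvector.

Definition flip n (x : cube n) (c : 'I_n) : cube n := [ffun i => x i (+) (i == c)].

Section HammingCube.
Variable n : nat.
Implicit Types (x y : cube n) (c : 'I_n).

Lemma flip_inj y : injective (flip y).
Proof.
move=> c c' /ffunP/(_ c); rewrite !ffunE eqxx.
by case: (y c); case: eqP => // ->.
Qed.

Lemma hweight_flip y c :
  hweight (flip y c) = if y c then (hweight y).-1 else (hweight y).+1.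
Proof.
have weight_set x : hweight x = #|[set i | x i]| by apply: eq_card => i; rewrite !inE.
have -> : hweight (flip y c) =
    #|if y c then [set i | y i] :\ c else c |: [set i | y i]|.
  apply: eq_card => i; rewrite !inE ffunE.
  by case: ifP => y_c; rewrite !inE; case: eqP => [->|]; rewrite ?y_c ?addbF.
rewrite weight_set; case: ifP => y_c.
  by rewrite (cardsD1 c [set i | y i]) inE y_c.
by rewrite cardsU1 inE y_c.
Qed.

Lemma hweight_eq0 x : hweight x = 0%N -> x = [ffun _ => false].
Proof.
move=> /card0_eq x0; apply/ffunP => i; rewrite ffunE; apply/negbTE.
by have := x0 i; rewrite !inE => ->.
Qed.

Lemma hadj_sym x y : hadj x y = hadj y x.
Proof. by rewrite /hadj; congr (_ == _); apply: eq_card => i; rewrite !inE eq_sym. Qed.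

Lemma hadjP x y : reflect (exists c, x = flip y c) (hadj x y).
Proof.
apply: (iffP card1P) => [[c diff_c]|[c ->]].
  exists c; apply/ffunP => i; have := diff_c i; rewrite !inE ffunE => <-.
  by case: (x i); case: (y i).
by exists c => i; rewrite !inE ffunE; case: (y i); case: (i == c).
Qed.

Lemma sum_hadj (R : pzSemiRingType) (F : cube n -> R) y :
  \sum_x (hadj x y)%:R * F x = \sum_c F (flip y c).
Proof.
rewrite (eq_bigr (fun x => if hadj x y then F x else 0)); last first.
  by move=> x _; rewrite mulr_natl mulrb.
rewrite -big_mkcond /=.
transitivity (\sum_(x in flip y @: [set: 'I_n]) F x).
  by apply: eq_bigl => x; apply/hadjP/imsetP => [[c ->]|[c _ ->]]; exists c.
rewrite big_imset /=; last by move=> c c' _ _; apply: flip_inj.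
by apply: eq_bigl => c; rewrite inE.
Qed.

Lemma sum_flip_hweight (R : pzSemiRingType) (f : nat -> R) y :
  \sum_c f (hweight (flip y c)) =
  (hweight y)%:R * f (hweight y).-1 + (n - hweight y)%:R * f (hweight y).+1.
Proof.
rewrite (bigID (fun c => y c)) /=.
rewrite (eq_bigr (fun _ => f (hweight y).-1)) => [|c y_c]; last by rewrite hweight_flip y_c.
rewrite [X in _ + X](eq_bigr (fun _ => f (hweight y).+1)) => [|c y_c]; last first.
  by rewrite hweight_flip (negPf y_c).
rewrite !sumr_const !mulr_natl; congr (_ *+ _ + _ *+ _).
rewrite -[X in (X - _)%N](card_ord n) -(cardC [pred c | y c]) addKn.
by apply: eq_card => c; rewrite !inE.
Qed.
End HammingCube.

Definition ball_spherical (R : Type) n r (f : nat -> R) : 'rV[R]_#|hball n r| :=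
  \row_i f (hweight (enum_val i)).

Section HammingBall.
Variables n r : nat.

Lemma origin_in_hball : [ffun _ => false] \in hball n r.
Proof. by rewrite inE /hweight (@eq_card0 _ [pred i | _]) // => i; rewrite inE ffunE. Qed.

Lemma ball_spherical_eigen (R : nzRingType) (f : nat -> R) lam :
  f r.+1 = 0 ->
  (forall k, (k <= r)%N -> k%:R * f k.-1 + (n - k)%:R * f k.+1 = lam * f k) ->
  ball_spherical n r f *m ball_adj R n r = lam *: ball_spherical n r f.
Proof.
move=> f_r1 f_rec; apply/rowP => j; rewrite !mxE.
under eq_bigr => i _ do rewrite !mxE.
move: (enum_val j) (enum_valP j) => y; rewrite inE => y_le.
transitivity (\sum_(x in hball n r) f (hweight x) * (hadj x y)%:R).
  by rewrite [RHS]big_enum_val.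
pose g x := if x \in hball n r then f (hweight x) else 0.
transitivity (\sum_x (hadj x y)%:R * g x).
  rewrite big_mkcond; apply: eq_bigr => x _; rewrite /g.
  by case: (x \in hball n r); rewrite ?mulr0 ?mul0r // mulr_natl mulr_natr.
rewrite sum_hadj -[RHS]f_rec // -sum_flip_hweight; apply: eq_bigr => c _.
rewrite /g inE hweight_flip; case: (y c); first by rewrite (leq_trans (leq_pred _) y_le).
by case: leqP => // r_lt; have -> : hweight y = r by lia.
Qed.

Lemma ball_adj_neq0 (R : numDomainType) i j :
  (ball_adj R n r i j != 0) = hadj (enum_val i) (enum_val j).
Proof. by rewrite mxE pnatr_eq0 eqb0 negbK. Qed.

Lemma ball_adj_connected (R : numDomainType) i j :
  connect (fun i j => ball_adj R n r i j != 0) i j.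
Proof.
set e := fun i j => _.
have e_sym : connect_sym e.
  by apply: sym_connect_sym => i' j'; rewrite /e !ball_adj_neq0 hadj_sym.
pose o := enum_rank_in origin_in_hball [ffun _ => false].
have to_origin w x :
    hweight x = w -> x \in hball n r -> connect e (enum_rank_in origin_in_hball x) o.
  elim: w x => [|w IHw] x x_w x_in; first by rewrite (hweight_eq0 x_w).
  have [c x_c] : exists c, x c.
    have /card_gt0P[c c_in] : (0 < hweight x)%N by rewrite x_w.
    by exists c; rewrite inE in c_in.
  have y_w : hweight (flip x c) = w by rewrite hweight_flip x_c x_w.
  have y_in : flip x c \in hball n r by move: x_in; rewrite !inE y_w x_w => /ltnW.
  apply: connect_trans (IHw _ y_w y_in); apply: connect1.
  by rewrite /e ball_adj_neq0 !enum_rankK_in // hadj_sym; apply/hadjP; exists c.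
have index_to_origin i' : connect e i' o.
  by rewrite -(enum_valK_in origin_in_hball i'); exact: to_origin (enum_valP i').
by rewrite (connect_trans (index_to_origin i)) // e_sym.
Qed.
End HammingBall.

Theorem corollary1p8 (R : rcfType) (n r : nat) (x : R) :
  (2 * r <= n)%N ->
  krawtchouk n r.+1 x = 0 ->
  (forall y : R, krawtchouk n r.+1 y = 0 -> x <= y) ->
  let A := ball_adj R n r in
  let lam := n%:R - 2 * x in
  [/\ eigenvalue A lam,
      (forall mu : R, eigenvalue A mu -> mu <= lam),
      \rank (eigenspace A lam) = 1%N,
      mup lam (char_poly A) = 1%N &
      exists v : 'rV[R]_#|hball n r|,
        [/\ v *m A = lam *: v,
            (forall i, 0 < v 0 i) &
            (forall i j, hweight (enum_val i) = hweight (enum_val j) -> v 0 i = v 0 j)]].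
Proof.
move=> two_r_le_n Kx x_min A lam.
have r_le_n : (r <= n)%N by lia.
pose f k := normalized_krawtchouk n k x.
pose v := ball_spherical n r f.
have v_gt0 i : 0 < v 0 i.
  have k_le_r : (hweight (enum_val i) <= r)%N by have := enum_valP i; rewrite inE.
  rewrite mxE divr_gt0 ?(krawtchouk_gt0_before_first_root r_le_n Kx x_min) //.
  by rewrite ltr0n bin_gt0 (leq_trans k_le_r r_le_n).
have vA : v *m A = lam *: v.
  apply: ball_spherical_eigen => [|k]; first by rewrite /f /normalized_krawtchouk Kx mul0r.
  exact: normalized_krawtchouk_root_recurrence.
have A_ge0 i j : 0 <= A i j by rewrite mxE ler0n.
have A_sym : A^T = A by apply/matrixP => i j; rewrite !mxE hadj_sym.
have N_gt0 : (0 < #|hball n r|)%N.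
  by apply/card_gt0P; exists [ffun _ => false]; exact: origin_in_hball.
have A_connected := @ball_adj_connected n r R.
split.
- exact: pos_eigenvalue v_gt0 N_gt0.
- exact: eigenvalue_le_pos_eigenvalue A_ge0 vA v_gt0 A_sym.
- exact: pos_eigenspace_rank A_ge0 vA v_gt0 N_gt0 A_connected.
- exact: pos_eigenvalue_mup A_ge0 vA v_gt0 N_gt0 A_sym A_connected.
- by exists v; split => // i j same_weight; rewrite !mxE same_weight.
Qed.
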